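(* Let $q\in\mathbb{N}$ be odd, $\alpha_2\in\mathbb{Z}$ with $\gcd(\alpha_2,q)=1$, and let $q_1>1$, $q_2$ be positive integers with $q_1q_2=\operatorname{rad}(q)$. For $N\in\mathbb{N}$ with $N\le q$ define $$L(q_1):=\sum_{\substack{|x_1|,|x_2|\le N\\ \gcd(x_1^2+\alpha_2x_2^2,q_2)=1}}\left(\frac{x_1^2+\alpha_2x_2^2}{q_1}\right).$$ Then for every $\varepsilon>0$, $L(q_1)\ll_\varepsilon Nq_1^2q^{\varepsilon}$.
   Context: $\operatorname{rad}(q)$ is the product of the distinct primes dividing $q$; $\left(\frac{\cdot}{q_1}\right)$ is the Jacobi symbol. *)

From HB Require Import structures.
From mathcomp Require Import all_boot all_order all_algebra.
From mathcomp Require Import reals exp.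
Set Implicit Arguments. Unset Strict Implicit. Unset Printing Implicit Defensive.
Import Order.TTheory GRing.Theory Num.Theory.
Local Open Scope ring_scope.

Definition radical (n : nat) : nat := (\prod_(p <- primes n) p)%N.

Definition legendre (a : int) (p : nat) : int :=
  if (p%:Z %| a)%Z then 0
  else if [exists x : 'I_p, (p%:Z %| (x%:Z * x%:Z - a))%Z] then 1 else -1.

Definition jacobi (a : int) (n : nat) : int :=
  \prod_(p <- primes n) (legendre a p) ^+ (logn p n).

Definition Lsum (q1 q2 N : nat) (a2 : int) : int :=
  \sum_(i < (2 * N).+1) \sum_(j < (2 * N).+1)
    let x1 := i%:Z - N%:Z in
    let x2 := j%:Z - N%:Z in
    let v := x1 ^+ 2 + a2 * x2 ^+ 2 in
    if coprimez v q2%:Z then jacobi v q1 else 0.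

From HB Require Import structures.
From mathcomp Require Import all_boot all_order all_algebra.
From mathcomp Require Import reals exp.
From mathcomp Require Import ring lra zify.
Set Implicit Arguments. Unset Strict Implicit. Unset Printing Implicit Defensive.
Import Order.TTheory GRing.Theory Num.Theory.
Local Open Scope ring_scope.

(* Reducing (x1, x2) modulo q1 writes L(q1) as the sum over residue pairs u of
   chi(u) C(u), where chi(u) is the Jacobi symbol of Q(u) = u1^2 + a2 u2^2 mod q1
   and C(u) counts the points of the box congruent to u with Q coprime to q2.
   Inclusion-exclusion over the primes of q2, the Chinese remainder theorem
   (q1 and q2 are coprime because q1 q2 is squarefree) and the bound 2^k on the
   number of square roots modulo a product of k primes give
   C(u) = A + O(4^omega(q2) N) with A independent of u.  The complete sum of chi
   vanishes, as it factors through the complete Legendre sum of the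
   nondegenerate form Q modulo a prime p | q1, which is 0.  Hence
   |L(q1)| <= q1^2 O(4^omega(q) N), and 4^omega(q) = O(q^eps). *)

Definition dvz (m : nat) (x : int) : bool := (m%:Z %| x)%Z.

Definition periodic {V : Type} (g : int -> V) (d : nat) :=
  forall x x', dvz d (x - x') -> g x = g x'.

Lemma dvzD (m : nat) (x y : int) : dvz m x -> dvz m y -> dvz m (x + y).
Proof. exact: rpredD. Qed.

Lemma dvzB (m : nat) (x y : int) : dvz m x -> dvz m y -> dvz m (x - y).
Proof. exact: rpredB. Qed.

Lemma dvz_subrr (m : nat) (x : int) : dvz m (x - x).
Proof. by rewrite subrr /dvz dvdz0. Qed.

Lemma dvz_congr (m : nat) (x x' : int) : dvz m (x - x') -> dvz m x = dvz m x'.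
Proof. by move=> h; rewrite -[x](subrK x') /dvz rpredDl. Qed.

Lemma periodic_if_dvz (V : Type) (m : nat) (f : int -> int) (a b : V) :
  (forall x x', dvz m (x - x') -> dvz m (f x - f x')) ->
  periodic (fun x => if dvz m (f x) then a else b) m.
Proof. by move=> fP x x' /fP /dvz_congr ->. Qed.

Lemma dvz_subC (m : nat) (x y : int) : dvz m (x - y) = dvz m (y - x).
Proof. by rewrite /dvz -opprB rpredN. Qed.

Lemma dvz_modz_sub (p : nat) (c : int) : dvz p ((c %% p%:Z)%Z - c).
Proof. by rewrite /dvz -eqz_mod_dvd modz_mod. Qed.

Lemma dvz_mul_coprime (m k : nat) (x : int) : coprime m k ->
  dvz (m * k) x = dvz m x && dvz k x.
Proof. by move=> cop; rewrite /dvz !dvdzE /=; apply: Gauss_dvd. Qed.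

Lemma dvz_EuclidM (p : nat) (a b : int) : prime p -> dvz p (a * b) = dvz p a || dvz p b.
Proof. by move=> pp; rewrite /dvz !dvdzE abszM /=; apply: Euclid_dvdM. Qed.

Lemma dvz_sq (p : nat) (y : int) : prime p -> dvz p (y ^+ 2) = dvz p y.
Proof. by move=> pp; rewrite expr2 dvz_EuclidM // orbb. Qed.

Lemma absz_modz_lt (x : int) (p : nat) : (0 < p)%N -> (`|(x %% p%:Z)%Z| < p)%N.
Proof.
move=> p0; have pz : p%:Z != 0 by rewrite eqz_nat -lt0n.
by rewrite -ltz_nat gez0_abs ?modz_ge0 // ltz_pmod // ltz_nat.
Qed.

Lemma dvz_sub_ord_eq (p k1 k2 : nat) : (k1 < p)%N -> (k2 < p)%N ->
  dvz p (k1%:Z - k2%:Z) -> k1 = k2.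
Proof.
move=> h1 h2; rewrite /dvz dvdzE /= => hd.
have [e|ne] := eqVneq `|k1%:Z - k2%:Z|%N 0%N; first lia.
have := dvdn_leq _ hd; rewrite lt0n ne => /(_ isT); lia.
Qed.

(* The residue [c %% p] is the unique [t < p] congruent to [c]. *)
Lemma sum_ord_dvz_sub (V : nmodType) (p : nat) (c : int) (x : V) : (0 < p)%N ->
  \sum_(t < p) (if dvz p (t%:Z - c) then x else 0) = x.
Proof.
move=> p0; pose t0 := Ordinal (absz_modz_lt c p0).
have t0E : t0%:Z = (c %% p%:Z)%Z by rewrite /= gez0_abs // modz_ge0 // eqz_nat -lt0n.
rewrite (bigD1 t0) //= t0E dvz_modz_sub big1 ?addr0 // => t /eqP ne.
case: ifP => // ht; case: ne; apply: ord_inj; apply: (dvz_sub_ord_eq (ltn_ord t) (ltn_ord t0)).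
rewrite t0E (_ : _ - _ = (t%:Z - c) - ((c %% p%:Z)%Z - c)); last by ring.
by apply: dvzB; rewrite ?dvz_modz_sub.
Qed.

Lemma sum_ord_dvz_subr (V : nmodType) (p : nat) (c : int) (x : V) : (0 < p)%N ->
  \sum_(t < p) (if dvz p (c - t%:Z) then x else 0) = x.
Proof. by move=> p0; under eq_bigr do rewrite dvz_subC; apply: sum_ord_dvz_sub. Qed.

Lemma sum_ord_affine (V : nmodType) (p : nat) (m w : int) (h : int -> V) :
  (0 < p)%N -> coprimez m p%:Z -> periodic h p ->
  \sum_(k < p) h (w + m * k%:Z) = \sum_(a < p) h a%:Z.
Proof.
move=> p0 cop hP.
pose f (k : 'I_p) : 'I_p := Ordinal (absz_modz_lt (w + m * k%:Z) p0).
have fE k : (f k)%:Z = ((w + m * k%:Z) %% p%:Z)%Z.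
  by rewrite /= gez0_abs // modz_ge0 // eqz_nat -lt0n.
have finj : injective f.
  move=> k1 k2 /(congr1 (fun o : 'I_p => (o : nat)%:Z)); rewrite !fE => /eqP.
  rewrite eqz_mod_dvd (_ : _ - _ = m * (k1%:Z - k2%:Z)); last by ring.
  rewrite Gauss_dvdzr; last by rewrite coprimez_sym.
  by move=> hd; apply: val_inj; exact: dvz_sub_ord_eq (ltn_ord k1) (ltn_ord k2) hd.
rewrite (reindex_inj (F := fun a : 'I_p => h a%:Z) finj).
by apply: eq_bigr => k _; apply: hP; rewrite fE dvz_subC dvz_modz_sub.
Qed.

Lemma sum_ord_mul (V : nmodType) (a b : nat) (h : int -> V) :
  \sum_(x < a * b) h x%:Z = \sum_(k < b) \sum_(w < a) h (w%:Z + a%:Z * k%:Z).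
Proof.
elim: b => [|b IH]; first by rewrite muln0 !big_ord0.
rewrite mulnSr big_split_ord IH big_ord_recr /=; congr (_ + _).
by apply: eq_bigr => w _ /=; congr h; rewrite PoszD PoszM; ring.
Qed.

Section ProgressionSums.
Variables (q1 : nat) (u : int).

Definition progression_sum {V : nmodType} (g : int -> V) (n : nat) (y : int) : V :=
  \sum_(i < n) (if dvz q1 (y + i%:Z - u) then g (y + i%:Z) else 0).

Lemma eq_progression_sum (V : nmodType) (f g : int -> V) n y :
  (forall x, f x = g x) -> progression_sum f n y = progression_sum g n y.
Proof. by move=> fg; apply: eq_bigr => i _; rewrite fg. Qed.

Lemma progression_sumD (V : nmodType) (f g : int -> V) n y :
  progression_sum (fun x => f x + g x) n y = progression_sum f n y + progression_sum g n y.
Proof. by rewrite -big_split; apply: eq_bigr => i _ /=; case: ifP; rewrite ?addr0. Qed.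

Lemma progression_sumMl (R : pzSemiRingType) (c : R) (f : int -> R) n y :
  progression_sum (fun x => c * f x) n y = c * progression_sum f n y.
Proof. by rewrite mulr_sumr; apply: eq_bigr => i _; case: ifP; rewrite ?mulr0. Qed.

Lemma progression_sum_splitl (V : nmodType) (g : int -> V) m n y :
  progression_sum g (m + n) y = progression_sum g m y + progression_sum g n (y + m%:Z).
Proof.
rewrite /progression_sum big_split_ord; congr (_ + _).
by apply: eq_bigr => i _ /=; rewrite PoszD addrA.
Qed.

Lemma progression_sum_ge0 (R : numDomainType) (g : int -> R) n y :
  (forall x, 0 <= g x) -> 0 <= progression_sum g n y.
Proof. by move=> g0; apply: sumr_ge0 => i _; case: ifP. Qed.

Lemma progression_sum_norm_le (R : numDomainType) (f : int -> R) (K : R) n y :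
  (forall x, `|f x| <= K) ->
  `|progression_sum f n y| <= K * progression_sum (fun _ => 1) n y.
Proof.
move=> fK; rewrite -progression_sumMl; apply: le_trans (ler_norm_sum _ _ _) _.
by apply: ler_sum => i _; case: ifP; rewrite ?normr0 ?mulr1.
Qed.

Hypothesis q1_gt0 : (0 < q1)%N.

(* Over [q1 * d] consecutive integers, the progression [x = u (mod q1)] meets
   every residue class mod [d] exactly once (Chinese remainders). *)
Lemma progression_sum_period (V : nmodType) (d : nat) (g : int -> V) y :
  (0 < d)%N -> coprimez q1%:Z d%:Z -> periodic g d ->
  progression_sum g (q1 * d) y = \sum_(s < d) g s%:Z.
Proof.
move=> d0 cop gP.
pose H x := if dvz q1 (x - u) then g x else 0.
have HP : periodic H (q1 * d).
  move=> x x' hx; rewrite /H.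
  have h1 : dvz q1 (x - x') by apply: dvdz_trans hx; rewrite PoszM dvdz_mulr.
  have h2 : dvz d (x - x') by apply: dvdz_trans hx; rewrite PoszM dvdz_mull.
  rewrite (gP _ _ h2) (_ : x - u = (x - x') + (x' - u)); last by ring.
  by rewrite /dvz rpredDl.
have c1 : coprimez 1 (q1 * d)%N%:Z by rewrite coprimezE /= coprime1n.
transitivity (\sum_(i < q1 * d) H (y + 1 * i%:Z)).
  by apply: eq_bigr => i _; rewrite mul1r.
rewrite sum_ord_affine ?muln_gt0 ?q1_gt0 // sum_ord_mul exchange_big /=.
rewrite -[RHS](sum_ord_dvz_sub u _ q1_gt0); apply: eq_bigr => w _.
have shift k : dvz q1 (w%:Z + q1%:Z * k%:Z - u) = dvz q1 (w%:Z - u).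
  rewrite (_ : _ - u = q1%:Z * k%:Z + (w%:Z - u)); last by ring.
  by rewrite /dvz rpredDl // dvdz_mulr.
rewrite /H; under eq_bigr do rewrite shift.
by case: ifP => _; [rewrite sum_ord_affine | rewrite big1].
Qed.

Lemma progression_sum_approx (R : realFieldType) (d : nat) (g : int -> R) n y :
  (0 < d)%N -> coprimez q1%:Z d%:Z -> periodic g d -> (forall x, 0 <= g x) ->
  `|progression_sum g n y - n%:R / (q1 * d)%N%:R * \sum_(s < d) g s%:Z|
    <= \sum_(s < d) g s%:Z.
Proof.
move=> d0 cop gP g0; set G := \sum_(s < d) _; set M := (q1 * d)%N.
have M0 : (0 < M)%N by rewrite muln_gt0 q1_gt0 d0.
have G0 : 0 <= G by apply: sumr_ge0.
elim/ltn_ind: n y => n IH y.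
case: (ltnP n M) => hn.
  have S0 : 0 <= progression_sum g n y by apply: progression_sum_ge0.
  have S1 : progression_sum g n y <= G.
    rewrite /G -(progression_sum_period y d0 cop gP) -/M -(subnKC (ltnW hn)).
    by rewrite progression_sum_splitl lerDl progression_sum_ge0.
  have t0 : 0 <= n%:R / M%:R :> R by apply: divr_ge0.
  have t1 : n%:R / M%:R <= 1 :> R by rewrite ler_pdivrMr ?ltr0n // mul1r ler_nat ltnW.
  have : n%:R / M%:R * G <= G by rewrite -[X in _ <= X]mul1r ler_wpM2r.
  have : 0 <= n%:R / M%:R * G by rewrite mulr_ge0.
  rewrite ler_norml; lra.
have hlt : (n - M < n)%N by rewrite ltn_subrL M0 (leq_trans M0 hn).
rewrite -(subnKC hn) progression_sum_splitl progression_sum_period // -/G natrD.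
set S := progression_sum g (n - M) _.
rewrite (_ : G + S - _ = S - (n - M)%:R / M%:R * G); first exact: IH.
by field; rewrite pnatr_eq0 -lt0n.
Qed.

Lemma progression_count_le (R : realFieldType) n y :
  progression_sum (fun _ => 1 : R) n y <= n%:R / q1%:R + 1.
Proof.
have cop1 : coprimez q1%:Z 1%N%:Z by rewrite coprimezE /= coprimen1.
have := progression_sum_approx (g := fun _ => 1 : R) n y (isT : (0 < 1)%N) cop1 (fun _ _ _ => erefl) (fun _ => ler01).
by rewrite big_ord1 muln1 mulr1 ler_norml => /andP [_]; lra.
Qed.

End ProgressionSums.

Section BoxSums.
Variables (q1 : nat) (u1 u2 : int).

Definition box_sum {V : nmodType} (h : int -> int -> V) (n : nat) (y : int) : V :=
  progression_sum q1 u2 (fun x2 => progression_sum q1 u1 (h^~ x2) n y) n y.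

Lemma eq_box_sum (V : nmodType) (h1 h2 : int -> int -> V) n y :
  (forall x1 x2, h1 x1 x2 = h2 x1 x2) -> box_sum h1 n y = box_sum h2 n y.
Proof. by move=> e; apply: eq_progression_sum => x2; apply: eq_progression_sum. Qed.

Lemma box_sumB (V : zmodType) (h1 h2 : int -> int -> V) n y :
  box_sum (fun x1 x2 => h1 x1 x2 - h2 x1 x2) n y = box_sum h1 n y - box_sum h2 n y.
Proof.
rewrite /box_sum /progression_sum -sumrB; apply: eq_bigr => j _.
case: ifP => _; last by rewrite subr0.
by rewrite -sumrB; apply: eq_bigr => i _; case: ifP; rewrite ?subr0.
Qed.

Hypothesis q1_gt0 : (0 < q1)%N.

Lemma box_sum_approx (R : realFieldType) (d n : nat) (y : int) (h : int -> int -> R) (K : R) :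
  (0 < d)%N -> coprimez q1%:Z d%:Z ->
  (forall x2, periodic (h^~ x2) d) -> (forall x1, periodic (h x1) d) ->
  (forall x1 x2, 0 <= h x1 x2) -> (forall x2, \sum_(s < d) h s%:Z x2 <= K) ->
  `|box_sum h n y - (n%:R / (q1 * d)%N%:R) ^+ 2 * \sum_(t < d) \sum_(s < d) h s%:Z t%:Z|
    <= K * (2 * n%:R / q1%:R + 1).
Proof.
move=> d0 cop hP1 hP2 h0 hK.
set c := n%:R / _; set Rr := \sum_(t < d) _.
pose rho x2 := \sum_(s < d) h s%:Z x2.
pose T x2 := progression_sum q1 u1 (h^~ x2) n y.
have rho0 x2 : 0 <= rho x2 by apply: sumr_ge0.
have K0 : 0 <= K := le_trans (rho0 0) (hK 0).
have c0 : 0 <= c by apply: divr_ge0.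
have hT x2 : `|T x2 - c * rho x2| <= K.
  exact: le_trans (progression_sum_approx u1 q1_gt0 n y d0 cop (hP1 x2) (h0^~ x2)) (hK x2).
have rhoP : periodic rho d by move=> x x' hx; apply: eq_bigr => s _; exact: hP2.
have hrho := progression_sum_approx u2 q1_gt0 n y d0 cop rhoP rho0.
rewrite -/c -/Rr in hrho.
have Rr_le : Rr <= d%:R * K.
  have -> : d%:R * K = \sum_(t < d) K by rewrite sumr_const card_ord mulr_natl.
  by apply: ler_sum => t _; exact: hK.
have -> : box_sum h n y = progression_sum q1 u2 (fun x2 => T x2 - c * rho x2) n y
                          + c * progression_sum q1 u2 rho n y.
  rewrite -progression_sumMl -progression_sumD.
  by apply: eq_progression_sum => x2; rewrite subrK.
set E1 := progression_sum _ _ _ n y; set E2 := progression_sum _ _ rho n y.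
have hE1 : `|E1| <= K * (n%:R / q1%:R + 1).
  apply: le_trans (progression_sum_norm_le q1 u2 n y hT) _.
  by rewrite ler_wpM2l // progression_count_le.
rewrite (_ : _ - _ = E1 + c * (E2 - c * Rr)); last by ring.
apply: le_trans (ler_normD _ _) _; rewrite normrM (ger0_norm c0).
have h2 : c * `|E2 - c * Rr| <= c * Rr by apply: ler_wpM2l.
have h3 : c * Rr <= n%:R / q1%:R * K.
  apply: le_trans (ler_wpM2l c0 Rr_le) _.
  rewrite /c natrM (_ : _ * (d%:R * K) = n%:R / q1%:R * K) //.
  by field; rewrite !pnatr_eq0 -!lt0n d0 q1_gt0.
have -> : K * (2 * n%:R / q1%:R + 1) = K * (n%:R / q1%:R + 1) + n%:R / q1%:R * K.
  by rewrite -mulrA; ring.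
lra.
Qed.

End BoxSums.

Lemma dvz_sq_roots (p : nat) (a a0 c : int) : prime p ->
  dvz p (a0 ^+ 2 + c) -> dvz p (a ^+ 2 + c) -> dvz p (a - a0) || dvz p (a + a0).
Proof.
move=> pp h0 h; rewrite -dvz_EuclidM //.
by rewrite (_ : _ * _ = (a ^+ 2 + c) - (a0 ^+ 2 + c)); [apply: dvzB | ring].
Qed.

Lemma count_sqrt_mod_prime (R : realFieldType) (p : nat) (c : int) : prime p ->
  \sum_(a < p) (if dvz p (a%:Z ^+ 2 + c) then 1 else 0 : R) <= 2.
Proof.
move=> pp; have p0 := prime_gt0 pp.
case: (pickP (fun a : 'I_p => dvz p (a%:Z ^+ 2 + c))) => [a0 ha0|none]; last first.
  by rewrite big1 ?ler0n // => a _; rewrite none.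
apply: (@le_trans _ _ (\sum_(a < p) ((if dvz p (a%:Z - a0%:Z) then 1 else 0)
                                   + (if dvz p (a%:Z - - a0%:Z) then 1 else 0)))).
  apply: ler_sum => a _; case: ifP => ha; last by rewrite addr_ge0 //; case: ifP.
  case/orP: (dvz_sq_roots pp ha0 ha) => h; first by rewrite h lerDl; case: ifP.
  by rewrite opprK h lerDr; case: ifP.
by rewrite big_split /= !sum_ord_dvz_sub.
Qed.

Lemma prod_primes_gt0 (D : seq nat) : all prime D -> (0 < \prod_(r <- D) r)%N.
Proof.
elim: D => [|p D IH] /=; first by rewrite big_nil.
by move=> /andP [pp aD]; rewrite big_cons muln_gt0 prime_gt0 // IH.
Qed.

Lemma coprime_prod_primes (p : nat) (D : seq nat) : prime p -> all prime D -> p \notin D ->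
  coprime p (\prod_(r <- D) r).
Proof.
move=> pp aD pD; rewrite prime_coprime // Euclid_dvd_prod // big_has.
apply/hasPn => r rD; rewrite dvdn_prime2 //; last exact: (allP aD).
by apply/negP => /eqP e; rewrite e rD in pD.
Qed.

(* Chinese remainders: the root count is multiplicative over the primes of [D]. *)
Lemma count_sqrt_mod_squarefree (R : realFieldType) (D : seq nat) (c : int) :
  uniq D -> all prime D ->
  \sum_(s < \prod_(p <- D) p)
     (if dvz (\prod_(p <- D) p) (s%:Z ^+ 2 + c) then 1 else 0 : R) <= 2 ^+ size D.
Proof.
elim: D => [|p D IH] /=.
  by move=> _ _; rewrite big_nil big_ord1 expr0; case: ifP.
move=> /andP [pD uD] /andP [pp aD].
have cop : coprimez (\prod_(r <- D) r)%:Z p%:Z.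
  by rewrite coprimezE /= coprime_sym coprime_prod_primes.
move: (prod_primes_gt0 aD) cop (IH uD aD); set d := \prod_(r <- D) r => d0 cop IHd.
pose F1 (w : int) := (if dvz d (w ^+ 2 + c) then 1 else 0 : R).
pose F2 (x : int) := (if dvz p (x ^+ 2 + c) then 1 else 0 : R).
rewrite big_cons -/d mulnC (sum_ord_mul d p (fun x => if dvz (d * p) (x ^+ 2 + c) then 1 else 0)).
rewrite exprS; apply: (@le_trans _ _ (\sum_(k < p) \sum_(w < d) F1 w%:Z * F2 (w%:Z + d%:Z * k%:Z))).
  apply: ler_sum => k _; apply: ler_sum => w _.
  case: ifP => hx; last by apply: mulr_ge0; [rewrite /F1|rewrite /F2]; case: ifP.
  have hd : dvz d ((w%:Z + d%:Z * k%:Z) ^+ 2 + c).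
    by apply: dvdz_trans hx; rewrite PoszM dvdz_mulr.
  have hp : dvz p ((w%:Z + d%:Z * k%:Z) ^+ 2 + c).
    by apply: dvdz_trans hx; rewrite PoszM dvdz_mull.
  rewrite /F1 /F2 hp mulr1.
  rewrite (_ : w%:Z ^+ 2 + c = ((w%:Z + d%:Z * k%:Z) ^+ 2 + c)
                              - d%:Z * (k%:Z * (2 * w%:Z + d%:Z * k%:Z))); last by ring.
  by rewrite /dvz rpredB // dvdz_mulr.
have F2P : periodic F2 p.
  move=> x x' hx; rewrite /F2 (_ : x ^+ 2 + c = (x - x') * (x + x') + (x' ^+ 2 + c)); last by ring.
  by rewrite /dvz rpredDl // dvdz_mulr.
rewrite exchange_big /=.
under eq_bigr do rewrite -mulr_sumr (sum_ord_affine _ (prime_gt0 pp) cop F2P).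
apply: (@le_trans _ _ (\sum_(w < d) F1 w%:Z * 2)).
  apply: ler_sum => w _; apply: ler_wpM2l; first by rewrite /F1; case: ifP.
  exact: count_sqrt_mod_prime.
by rewrite -mulr_suml mulrC ler_wpM2l.
Qed.

Definition qform (a2 x1 x2 : int) : int := x1 ^+ 2 + a2 * x2 ^+ 2.

Lemma qform_congr (m : nat) (a2 x1 x2 y1 y2 : int) : dvz m (x1 - y1) -> dvz m (x2 - y2) ->
  dvz m (qform a2 x1 x2 - qform a2 y1 y2).
Proof.
move=> h1 h2; rewrite /qform (_ : _ - _ = (x1 - y1) * (x1 + y1) + (x2 - y2) * (a2 * (x2 + y2))).
  by apply: dvzD; rewrite /dvz dvdz_mulr.
by ring.
Qed.

(* Inclusion-exclusion ([sieve_weight_cons]) moves primes from [P] to [D]; for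
   [P = primes q2] and [D = [::]] this is the indicator of [gcd(Q, q2) = 1]. *)
Definition sieve_weight (R : nzRingType) (a2 : int) (P D : seq nat) (x1 x2 : int) : R :=
  (if dvz (\prod_(r <- D) r) (qform a2 x1 x2) then 1 else 0) *
  \prod_(p <- P) (if dvz p (qform a2 x1 x2) then 0 else 1).

Lemma sieve_weight_cons (R : nzRingType) (a2 : int) (p : nat) (P D : seq nat) x1 x2 :
  prime p -> all prime D -> p \notin D ->
  sieve_weight R a2 (p :: P) D x1 x2 =
  sieve_weight R a2 P D x1 x2 - sieve_weight R a2 P (p :: D) x1 x2.
Proof.
move=> pp aD pD; rewrite /sieve_weight !big_cons dvz_mul_coprime ?coprime_prod_primes //.
by case: (dvz p _); case: (dvz (\prod_(r <- D) r) _); rewrite ?mul0r ?mul1r ?mulr0 ?subr0 ?subrr.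
Qed.

Lemma coprime_prod_all (m : nat) (D : seq nat) : all (coprime m) D -> coprime m (\prod_(r <- D) r).
Proof.
elim: D => [|p D IH] /=; first by rewrite big_nil coprimen1.
by move=> /andP [h1 h2]; rewrite big_cons coprimeMr h1 IH.
Qed.

Section Sieve.
Variables (R : realFieldType) (a2 : int) (q1 n : nat) (y : int).
Hypothesis q1_gt0 : (0 < q1)%N.

Lemma sieve_box_sum_base (D : seq nat) : uniq D -> all prime D -> all (coprime q1) D ->
  exists A : R, forall u1 u2,
    `|box_sum q1 u1 u2 (sieve_weight R a2 [::] D) n y - A|
      <= 2 ^+ size D * (2 * n%:R / q1%:R + 1).
Proof.
move=> uD aD cD; set d := \prod_(r <- D) r.
have d0 : (0 < d)%N := prod_primes_gt0 aD.
have cop : coprimez q1%:Z d%:Z by rewrite coprimezE /= coprime_prod_all.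
have wE x1 x2 : sieve_weight R a2 [::] D x1 x2 = if dvz d (qform a2 x1 x2) then 1 else 0.
  by rewrite /sieve_weight big_nil mulr1.
eexists => u1 u2; apply: (box_sum_approx u1 u2 q1_gt0 n y d0 cop).
- move=> x2 x x' hx; rewrite !wE (dvz_congr (qform_congr a2 hx (dvz_subrr d x2))) //.
- move=> x1 x x' hx; rewrite !wE (dvz_congr (qform_congr a2 (dvz_subrr d x1) hx)) //.
- by move=> x1 x2; rewrite wE; case: ifP.
- move=> x2; under eq_bigr do rewrite wE.
  exact: count_sqrt_mod_squarefree.
Qed.

Lemma sieve_box_sum_approx (P D : seq nat) :
  uniq P -> uniq D -> all prime P -> all prime D -> all (fun p => p \notin D) P ->
  all (coprime q1) P -> all (coprime q1) D ->
  exists A : R, forall u1 u2,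
    `|box_sum q1 u1 u2 (sieve_weight R a2 P D) n y - A|
      <= 4 ^+ size P * 2 ^+ size D * (2 * n%:R / q1%:R + 1).
Proof.
elim: P D => [|p P IH] D /=.
  by move=> _ uD _ aD _ _ cD; rewrite expr0 mul1r; apply: sieve_box_sum_base.
move=> /andP [pP uP] uD /andP [pp aP] aD /andP [pD dP] /andP [cp cP] cD.
have [A1 h1] := IH D uP uD aP aD dP cP cD.
have dP' : all (fun r => r \notin p :: D) P.
  apply/allP => r rP; rewrite in_cons negb_or (allP dP r rP) andbT.
  by apply/eqP => e; rewrite -e rP in pP.
have [A2 h2] := IH (p :: D) uP (introT andP (conj pD uD)) aP
  (introT andP (conj pp aD)) dP' cP (introT andP (conj cp cD)).
exists (A1 - A2) => u1 u2.
rewrite (eq_box_sum q1 u1 u2 n y (fun x1 x2 => sieve_weight_cons R a2 P x1 x2 pp aD pD)) box_sumB.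
rewrite (_ : _ - _ - _ = (box_sum q1 u1 u2 (sieve_weight R a2 P D) n y - A1)
                       - (box_sum q1 u1 u2 (sieve_weight R a2 P (p :: D)) n y - A2)); last by ring.
apply: le_trans (ler_normB _ _) _; apply: le_trans (lerD (h1 u1 u2) (h2 u1 u2)) _.
rewrite /= !exprS; set a := 4 ^+ size P; set b := 2 ^+ size D; set Z := (2 * _ / _ + 1).
have X0 : 0 <= a * b * Z by rewrite !mulr_ge0 ?exprn_ge0 // addr_ge0 // divr_ge0 // mulr_ge0.
have E1 : a * b * Z + a * (2 * b) * Z = 3 * (a * b * Z) by ring.
have E2 : 4 * a * b * Z = 4 * (a * b * Z) by ring.
lra.
Qed.

End Sieve.

Lemma legendre_congr (p : nat) (a a' : int) : dvz p (a - a') -> legendre a p = legendre a' p.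
Proof.
move=> h; rewrite /legendre.
have -> : (p%:Z %| a)%Z = (p%:Z %| a')%Z := dvz_congr h.
have -> : [exists x : 'I_p, (p%:Z %| x%:Z * x%:Z - a)%Z]
        = [exists x : 'I_p, (p%:Z %| x%:Z * x%:Z - a')%Z].
  apply: eq_existsb => x; apply: dvz_congr.
  rewrite (_ : x%:Z * x%:Z - a - (x%:Z * x%:Z - a') = - (a - a')); last by ring.
  by rewrite /dvz rpredN.
by [].
Qed.

Lemma jacobi_congr (n : nat) (a a' : int) : dvz n (a - a') -> jacobi a n = jacobi a' n.
Proof.
move=> h; rewrite /jacobi; apply: eq_big_seq => r hr; congr (_ ^+ _).
apply: legendre_congr; apply: dvdz_trans h.
by move: hr; rewrite mem_primes => /and3P [_ _ hd]; rewrite dvdzE.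
Qed.

Lemma jacobi_norm_le1 (R : realDomainType) (v : int) (n : nat) : `|(jacobi v n)%:~R : R| <= 1.
Proof.
rewrite /jacobi rmorph_prod; apply: (big_ind (fun x : R => `|x| <= 1)).
- by rewrite normr1.
- by move=> x y hx hy; rewrite normrM mulr_ile1.
move=> p _; rewrite rmorphXn normrX exprn_ile1 //.
by rewrite /legendre; case: ifP => _; [|case: ifP]; rewrite ?normrN ?normr1 ?normr0.
Qed.

Lemma jacobi_mul_prime (v : int) (m p : nat) : prime p -> (0 < m)%N -> ~~ (p %| m)%N ->
  jacobi v (m * p)%N = legendre v p * jacobi v m.
Proof.
move=> pp m0 pm; rewrite /jacobi.
have pe : perm_eq (primes (m * p)) (p :: primes m).
  apply: uniq_perm; first exact: primes_uniq.
    by rewrite /= primes_uniq andbT mem_primes (negbTE pm) !andbF.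
  move=> r; rewrite in_cons !mem_primes muln_gt0 m0 prime_gt0 //=.
  case: (eqVneq r p) => [->|ne]; first by rewrite pp dvdn_mull.
  case pr: (prime r) => //=.
  by rewrite Euclid_dvdM // (dvdn_prime2 pr pp) (negbTE ne) orbF.
rewrite (perm_big _ pe) big_cons.
have cpm : coprime p m by rewrite prime_coprime.
rewrite (lognM p m0 (prime_gt0 pp)) (logn_prime p pp) eqxx (logn_coprime cpm) add0n expr1.
congr (_ * _); apply: eq_big_seq => r hr.
have r0 : (0 < r)%N by move: hr; rewrite mem_primes => /andP [/prime_gt0].
rewrite (lognM r m0 (prime_gt0 pp)) (logn_prime r pp).
have -> : (r == p) = false.
  by apply/negP => /eqP e; move: hr; rewrite e mem_primes (negbTE pm) !andbF.
by rewrite addn0.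
Qed.

Lemma odd_prime_ndvz2 (p : nat) : prime p -> odd p -> ~~ dvz p 2.
Proof.
move=> pp op; rewrite /dvz dvdzE /= dvdn_prime2 //.
by apply/eqP => e; rewrite e in op.
Qed.

Lemma legendre_count_sqrt (v : int) (p : nat) : prime p -> odd p ->
  legendre v p = \sum_(y < p) (if dvz p (y%:Z ^+ 2 - v) then 1 else 0) - 1.
Proof.
move=> pp op; have p0 := prime_gt0 pp; rewrite /legendre.
case hv: (p%:Z %| v)%Z.
  rewrite (eq_bigr (fun y : 'I_p => if dvz p (y%:Z - 0) then 1 else 0)).
    by rewrite sum_ord_dvz_sub // subrr.
  move=> y _; rewrite subr0 -(dvz_sq y%:Z pp); congr (if _ then _ else _); apply: dvz_congr.
  by rewrite addrAC subrr sub0r /dvz rpredN.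
case: existsP => [[x0 hx0]|nex]; last first.
  rewrite big1 ?sub0r // => y _; case: ifP => // hy.
  by case: nex; exists y; rewrite -expr2.
have hx0' : dvz p (x0%:Z ^+ 2 + - v) by rewrite expr2.
have roots y : dvz p (y ^+ 2 - v) = dvz p (y - x0%:Z) || dvz p (y - - x0%:Z).
  rewrite opprK; apply/idP/idP => [hy|]; first exact: dvz_sq_roots pp hx0' hy.
  rewrite (_ : y ^+ 2 - v = (y - x0%:Z) * (y + x0%:Z) + (x0%:Z ^+ 2 + - v)); last by ring.
  case/orP => h; apply: dvzD => //; [exact: dvdz_mulr | exact: dvdz_mull].
(* A common root of both factors would give [p | 2 x0], hence [p | v]. *)
have excl y : ~~ (dvz p (y - x0%:Z) && dvz p (y - - x0%:Z)).
  apply/andP => -[h1 h2].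
  have : dvz p (2 * x0%:Z).
    by rewrite (_ : _ * _ = (y - - x0%:Z) - (y - x0%:Z)); [apply: dvzB | ring].
  rewrite dvz_EuclidM // (negbTE (odd_prime_ndvz2 pp op)) /= -(dvz_sq _ pp) => hx.
  have : dvz p v by rewrite (_ : v = x0%:Z ^+ 2 - (x0%:Z ^+ 2 + - v)); [apply: dvzB | ring].
  by rewrite /dvz hv.
rewrite (eq_bigr (fun y : 'I_p => (if dvz p (y%:Z - x0%:Z) then 1 else 0)
                               + (if dvz p (y%:Z - - x0%:Z) then 1 else 0))).
  by rewrite big_split /= !sum_ord_dvz_sub // addrK.
move=> y _; rewrite roots; have := excl y%:Z.
by case: (dvz p (_ - x0%:Z)); case: (dvz p (_ - - x0%:Z)).
Qed.

Lemma sum_const_int (p : nat) (x : int) : \sum_(t < p) x = p%:Z * x.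
Proof. by rewrite sumr_const card_ord -mulr_natl natz. Qed.

Lemma count_mul_eq (p : nat) (c : int) : prime p ->
  \sum_(s < p) \sum_(t < p) (if dvz p (s%:Z * t%:Z - c) then 1 else 0 : int)
   = (p%:Z - 1) + (if dvz p c then p%:Z else 0).
Proof.
case: p => [//|p] pp; have p0 := prime_gt0 pp.
rewrite big_ord_recl (eq_bigr (fun _ => if dvz p.+1 c then 1 else 0 : int)); last first.
  by move=> t _; rewrite mul0r sub0r /dvz rpredN.
rewrite [X in _ + X](eq_bigr (fun _ => 1 : int)) => [|k _]; last first.
  have ck : coprimez (lift ord0 k)%:Z p.+1%:Z.
    rewrite coprimezE /= coprime_sym prime_coprime // gtnNdvd //.
    exact: (ltn_ord (lift ord0 k)).
  have gP : periodic (fun t => if dvz p.+1 (t - c) then 1 else 0 : int) p.+1.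
    by apply: periodic_if_dvz => x x' hx; rewrite (_ : _ - _ = x - x') //; ring.
  by have := sum_ord_affine 0 p0 ck gP; rewrite sum_ord_dvz_sub // => <-.
by rewrite !sum_const_int mulr1; case: ifP => _; lia.
Qed.

(* [y = a + s] and [t = s + 2 a] turn [y^2 - a^2] into [s t]; [2] is invertible mod [p]. *)
Lemma count_sq_sub_sq (p : nat) (c : int) : prime p -> odd p ->
  \sum_(a < p) \sum_(y < p) (if dvz p (y%:Z ^+ 2 - a%:Z ^+ 2 - c) then 1 else 0 : int)
   = (p%:Z - 1) + (if dvz p c then p%:Z else 0).
Proof.
move=> pp op; have p0 := prime_gt0 pp; rewrite -count_mul_eq //.
transitivity (\sum_(s < p) \sum_(a < p)
   (if dvz p (s%:Z * (s%:Z + 2 * a%:Z) - c) then 1 else 0 : int)).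
  rewrite [RHS]exchange_big; apply: eq_bigr => a _ /=.
  have hP : periodic (fun y => if dvz p (y ^+ 2 - a%:Z ^+ 2 - c) then 1 else 0 : int) p.
    apply: periodic_if_dvz => x x' hx.
    by rewrite (_ : _ - _ = (x - x') * (x + x')); [exact: dvdz_mulr | ring].
  have c1 : coprimez 1 p%:Z by rewrite coprimezE /= coprime1n.
  rewrite -(sum_ord_affine a%:Z p0 c1 hP); apply: eq_bigr => s _ /=.
  by rewrite (_ : _ - _ - c = s%:Z * (s%:Z + 2 * a%:Z) - c) //; ring.
apply: eq_bigr => s _.
have gP : periodic (fun t => if dvz p (s%:Z * t - c) then 1 else 0 : int) p.
  apply: periodic_if_dvz => x x' hx.
  by rewrite (_ : _ - _ = s%:Z * (x - x')); [exact: dvdz_mull | ring].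
have c2 : coprimez 2 p%:Z.
  by rewrite coprimezE /= coprime_sym prime_coprime //; move: (odd_prime_ndvz2 pp op).
exact: (sum_ord_affine s%:Z p0 c2 gP).
Qed.

(* Summing [legendre_count_sqrt] over [a1, a2]: the count of [y^2 - a1^2 = b a2^2]
   is [p - 1] unless [a2 = 0], when it is [2 p - 1]. *)
Lemma sum_legendre_qform (p : nat) (b : int) : prime p -> odd p -> ~~ dvz p b ->
  \sum_(a1 < p) \sum_(a2 < p) legendre (qform b a1%:Z a2%:Z) p = 0.
Proof.
move=> pp op pb; have p0 := prime_gt0 pp.
rewrite exchange_big (eq_bigr (fun a2 : 'I_p => (if dvz p (a2%:Z - 0) then p%:Z else 0) - 1)).
  by rewrite sumrB sum_ord_dvz_sub // sum_const_int mulr1 subrr.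
move=> a2 _; rewrite (eq_bigr (fun a1 : 'I_p => \sum_(y < p)
  (if dvz p (y%:Z ^+ 2 - a1%:Z ^+ 2 - b * a2%:Z ^+ 2) then 1 else 0) - 1)).
  rewrite sumrB count_sq_sub_sq // sum_const_int mulr1.
  by rewrite dvz_EuclidM // (negbTE pb) dvz_sq // subr0 /=; ring.
move=> a1 _; rewrite legendre_count_sqrt //; congr (_ - _); apply: eq_bigr => y _.
by rewrite /qform opprD addrA.
Qed.

Lemma sum_legendre_qform_affine (m p : nat) (b w1 w2 : int) :
  prime p -> odd p -> ~~ dvz p b -> coprimez m%:Z p%:Z ->
  \sum_(k1 < p) \sum_(k2 < p) legendre (qform b (w1 + m%:Z * k1%:Z) (w2 + m%:Z * k2%:Z)) p = 0.
Proof.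
move=> pp op pb cop; have p0 := prime_gt0 pp.
have P1 x2 : periodic (fun x1 => legendre (qform b x1 x2) p) p.
  by move=> x x' h; apply/legendre_congr/qform_congr; rewrite ?dvz_subrr.
have P2 x1 : periodic (fun x2 => legendre (qform b x1 x2) p) p.
  by move=> x x' h; apply/legendre_congr/qform_congr; rewrite ?dvz_subrr.
under eq_bigr do rewrite (sum_ord_affine w2 p0 cop (P2 _)).
rewrite exchange_big /=; under eq_bigr do rewrite (sum_ord_affine w1 p0 cop (P1 _)).
by rewrite exchange_big sum_legendre_qform.
Qed.

(* Split residues mod [m p] as [w + m k]; by [jacobi_mul_prime] each block of [p^2]
   residues contributes a complete Legendre sum, which vanishes. *)
Lemma sum_jacobi_qform (m p : nat) (b : int) : prime p -> odd p -> ~~ dvz p b ->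
  (0 < m)%N -> ~~ (p %| m)%N ->
  \sum_(u1 < m * p) \sum_(u2 < m * p) jacobi (qform b u1%:Z u2%:Z) (m * p)%N = 0.
Proof.
move=> pp op pb m0 pm.
have cop : coprimez m%:Z p%:Z by rewrite coprimezE /= coprime_sym prime_coprime.
have mdvd (w : 'I_m) (k : 'I_p) : dvz m (w%:Z + m%:Z * k%:Z - w%:Z).
  by rewrite addrAC subrr add0r; apply: dvdz_mulr; rewrite dvdzz.
rewrite (sum_ord_mul m p (fun x => \sum_(u2 < m * p) jacobi (qform b x u2%:Z) (m * p)%N)).
under eq_bigr => k1 _ do under eq_bigr => w1 _ do
  rewrite (sum_ord_mul m p (fun x => jacobi (qform b (w1%:Z + m%:Z * k1%:Z) x) (m * p)%N)).
under eq_bigr => k1 _ do under eq_bigr => w1 _ do under eq_bigr => k2 _ do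
  under eq_bigr => w2 _ do rewrite jacobi_mul_prime //
    (jacobi_congr (qform_congr b (mdvd w1 k1) (mdvd w2 k2))).
rewrite exchange_big; apply: big1 => w1 _.
under eq_bigr do rewrite exchange_big; rewrite exchange_big; apply: big1 => w2 _.
under eq_bigr do rewrite -mulr_suml.
by rewrite -mulr_suml sum_legendre_qform_affine // mul0r.
Qed.

Lemma sum_box_by_residues (R : comPzRingType) (q1 n : nat) (y : int) (chi h : int -> int -> R) :
  (0 < q1)%N -> (forall x2, periodic (chi^~ x2) q1) -> (forall x1, periodic (chi x1) q1) ->
  \sum_(j < n) \sum_(i < n) chi (y + i%:Z) (y + j%:Z) * h (y + i%:Z) (y + j%:Z)
  = \sum_(u1 < q1) \sum_(u2 < q1) chi u1%:Z u2%:Z * box_sum q1 u1%:Z u2%:Z h n y.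
Proof.
move=> q0 P1 P2.
pose G (j i : 'I_n) (u1 u2 : 'I_q1) :=
  if dvz q1 (y + i%:Z - u1%:Z) && dvz q1 (y + j%:Z - u2%:Z)
  then chi u1%:Z u2%:Z * h (y + i%:Z) (y + j%:Z) else 0.
transitivity (\sum_(j < n) \sum_(i < n) \sum_(u1 < q1) \sum_(u2 < q1) G j i u1 u2).
  apply: eq_bigr => j _; apply: eq_bigr => i _.
  rewrite -[LHS](sum_ord_dvz_subr (y + i%:Z) _ q0); apply: eq_bigr => u1 _.
  rewrite /G; case: ifP => /= c1; last by rewrite big1.
  rewrite -[LHS](sum_ord_dvz_subr (y + j%:Z) _ q0); apply: eq_bigr => u2 _.
  by case: ifP => // c2; rewrite (P1 _ _ _ c1) (P2 _ _ _ c2).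
transitivity (\sum_(u1 < q1) \sum_(u2 < q1) \sum_(j < n) \sum_(i < n) G j i u1 u2).
  under eq_bigr do rewrite exchange_big; under eq_bigr do under eq_bigr do rewrite exchange_big.
  by rewrite exchange_big; apply: eq_bigr => u1 _; rewrite exchange_big.
apply: eq_bigr => u1 _; apply: eq_bigr => u2 _.
rewrite /box_sum /progression_sum mulr_sumr; apply: eq_bigr => j _.
rewrite /G; case: ifP => c2; last by rewrite mulr0 big1 // => i _; rewrite andbF.
by rewrite mulr_sumr; apply: eq_bigr => i _; rewrite andbT; case: ifP; rewrite ?mulr0.
Qed.

(* A mean-zero weight of size at most 1 kills the common value [A]. *)
Lemma sum_mean_zero_mul_le (R : realFieldType) (q1 : nat) (chi C : 'I_q1 -> 'I_q1 -> R) (A E : R) :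
  \sum_(u1 < q1) \sum_(u2 < q1) chi u1 u2 = 0 -> (forall u1 u2, `|chi u1 u2| <= 1) ->
  (forall u1 u2, `|C u1 u2 - A| <= E) ->
  `|\sum_(u1 < q1) \sum_(u2 < q1) chi u1 u2 * C u1 u2| <= q1%:R ^+ 2 * E.
Proof.
move=> s0 c1 hC.
have -> : \sum_(u1 < q1) \sum_(u2 < q1) chi u1 u2 * C u1 u2 =
          \sum_(u1 < q1) \sum_(u2 < q1) chi u1 u2 * (C u1 u2 - A)
          + (\sum_(u1 < q1) \sum_(u2 < q1) chi u1 u2) * A.
  rewrite mulr_suml -big_split; apply: eq_bigr => u1 _.
  by rewrite mulr_suml -big_split; apply: eq_bigr => u2 _ /=; ring.
rewrite s0 mul0r addr0.
apply: le_trans (ler_norm_sum _ _ _) _.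
have -> : q1%:R ^+ 2 * E = \sum_(u1 < q1) \sum_(u2 < q1) E.
  by rewrite !sumr_const !card_ord -mulrnA -[RHS]mulr_natl natrM expr2.
apply: ler_sum => u1 _; apply: le_trans (ler_norm_sum _ _ _) _; apply: ler_sum => u2 _.
by rewrite normrM -[E]mul1r ler_pM.
Qed.

Lemma mem_primes_radical (q p : nat) : prime p -> (p %| radical q)%N -> p \in primes q.
Proof.
move=> pp; rewrite /radical Euclid_dvd_prod // big_has => /hasP [r hr hpr].
have pr : prime r by move: hr; rewrite mem_primes => /andP [].
by move: hpr; rewrite dvdn_prime2 // => /eqP ->.
Qed.

Lemma radical_sqfree (q p : nat) : prime p -> ~~ (p * p %| radical q)%N.
Proof.
move=> pp; apply/negP => hd.
have hp : p \in primes q by apply: mem_primes_radical => //; apply: dvdn_trans hd; apply: dvdn_mulr.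
move: hd; rewrite /radical (big_rem p hp) /= dvdn_pmul2l ?prime_gt0 //.
rewrite Euclid_dvd_prod // big_has => /hasP [r hr hpr].
have pr : prime r.
  by move: hr; rewrite mem_rem_uniq ?primes_uniq // => /andP [_]; rewrite mem_primes => /andP [].
move: hpr; rewrite dvdn_prime2 // => /eqP e.
by move: hr; rewrite e mem_rem_uniq ?primes_uniq // inE eqxx.
Qed.

Lemma radical_le (q : nat) : (0 < q)%N -> (radical q <= q)%N.
Proof.
move=> q0; rewrite {2}(prod_prime_decomp q0) prime_decompE big_map /radical /=.
rewrite big_seq [X in (_ <= X)%N]big_seq; apply: leq_prod => p hp.
have p0 : (0 < p)%N by move: hp; rewrite mem_primes => /and3P [/prime_gt0].
by rewrite -{1}(expn1 p) leq_pexp2l // logn_gt0.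
Qed.

Lemma coprime_factor_radical (q q1 q2 : nat) : (q1 * q2)%N = radical q ->
  all (coprime q1) (primes q2).
Proof.
move=> hrad; apply/allP => r; rewrite mem_primes => /and3P [pr _ rq2].
rewrite coprime_sym prime_coprime //; apply/negP => rq1.
by move: (radical_sqfree q pr); rewrite -hrad dvdn_mul.
Qed.

Lemma coprime_all_primes (m n : nat) : (0 < n)%N ->
  coprime m n = all (fun p => ~~ (p %| m)%N) (primes n).
Proof.
move=> n0; case: (posnP m) => [->|m0].
  rewrite /coprime gcd0n; case: (ltnP n 2) => hn; first by have -> : n = 1%N by lia.
  have hp : pdiv n \in primes n by rewrite mem_primes pdiv_prime // n0 pdiv_dvd.
  have -> : (n == 1%N) = false by apply/negbTE; lia.
  by apply/esym/negbTE/allPn; exists (pdiv n) => //; rewrite dvdn0.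
rewrite coprime_has_primes // -all_predC; apply: eq_in_all => p hp /=.
by rewrite mem_primes m0 /=; move: hp; rewrite mem_primes => /andP [-> _].
Qed.

Lemma sieve_weight_primes (R : nzRingType) (q2 : nat) (a2 x1 x2 : int) : (0 < q2)%N ->
  sieve_weight R a2 (primes q2) [::] x1 x2 = if coprimez (qform a2 x1 x2) q2%:Z then 1 else 0.
Proof.
move=> q0; rewrite /sieve_weight big_nil /dvz dvdzE /= dvd1n mul1r.
rewrite coprimezE /= coprime_all_primes //.
elim: (primes q2) => [|p s IH] /=; first by rewrite big_nil.
by rewrite big_cons IH dvdzE /=; case: (p %| _)%N; rewrite ?mul0r ?mul1r.
Qed.

Lemma Lsum_residues (R : realFieldType) (q1 q2 N : nat) (a2 : int) : (0 < q1)%N -> (0 < q2)%N ->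
  (Lsum q1 q2 N a2)%:~R = \sum_(u1 < q1) \sum_(u2 < q1) (jacobi (qform a2 u1%:Z u2%:Z) q1)%:~R *
      box_sum q1 u1%:Z u2%:Z (sieve_weight R a2 (primes q2) [::]) (2 * N).+1 (- N%:Z) :> R.
Proof.
move=> q1_gt0 q2_gt0.
pose chi x1 x2 : R := (jacobi (qform a2 x1 x2) q1)%:~R.
have P1 x2 : periodic (chi^~ x2) q1.
  by move=> x x' hx; rewrite /chi (jacobi_congr (qform_congr a2 hx (dvz_subrr q1 x2))).
have P2 x1 : periodic (chi x1) q1.
  by move=> x x' hx; rewrite /chi (jacobi_congr (qform_congr a2 (dvz_subrr q1 x1) hx)).
rewrite -(sum_box_by_residues _ _ _ q1_gt0 P1 P2) /Lsum rmorph_sum exchange_big.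
apply: eq_bigr => j _; rewrite rmorph_sum; apply: eq_bigr => i _ /=.
rewrite sieve_weight_primes // /chi /qform !(addrC (- N%:Z)).
by case: ifP; rewrite ?mulr1 ?mulr0.
Qed.

(* Any prime [p] of [q1] is odd, does not divide [a2], and divides [q1] exactly once. *)
Lemma sum_jacobi_qform_radical (q q1 q2 : nat) (a2 : int) :
  odd q -> coprimez a2 q%:Z -> (1 < q1)%N -> (q1 * q2)%N = radical q ->
  \sum_(u1 < q1) \sum_(u2 < q1) jacobi (qform a2 u1%:Z u2%:Z) q1 = 0.
Proof.
move=> oq cop q1g hrad; have q10 : (0 < q1)%N by lia.
set p := pdiv q1; have pp : prime p by apply: pdiv_prime.
have q1rad : (q1 %| radical q)%N by rewrite -hrad dvdn_mulr.
have : p \in primes q.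
  by apply: mem_primes_radical => //; apply: dvdn_trans q1rad; apply: pdiv_dvd.
rewrite mem_primes => /and3P [_ _ pdq].
have op : odd p by case: (even_prime pp) => // e; move: pdq; rewrite e dvdn2 oq.
have pa : ~~ dvz p a2.
  apply/negP; rewrite /dvz dvdzE /= => ha; move: cop; rewrite coprimezE /= => cop.
  move: (coprime_dvdr pdq (coprime_dvdl ha cop)); rewrite /coprime gcdnn => /eqP e.
  by move: (prime_gt1 pp); rewrite e.
set m := (q1 %/ p)%N; have eq1 : q1 = (m * p)%N by rewrite /m divnK ?pdiv_dvd.
have m0 : (0 < m)%N by move: q10; rewrite eq1 muln_gt0 => /andP [].
have pm : ~~ (p %| m)%N.
  apply/negP => h; move: (radical_sqfree q pp); apply/negP/negPn.
  by apply: dvdn_trans q1rad; rewrite eq1 dvdn_mul.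
by move: pm m0; rewrite eq1 => pm m0; apply: sum_jacobi_qform.
Qed.

Lemma jacobi0 (n : nat) : (1 < n)%N -> jacobi 0 n = 0.
Proof.
move=> n1; have hp : pdiv n \in primes n by rewrite mem_primes pdiv_prime // pdiv_dvd andbT; lia.
rewrite /jacobi (big_rem _ hp) /= {1}/legendre dvdz0 expr0n.
have : (0 < logn (pdiv n) n)%N by rewrite logn_gt0.
by case: (logn (pdiv n) n) => //= k _; rewrite mul0r.
Qed.

Lemma Lsum0 (q1 q2 : nat) (a2 : int) : (1 < q1)%N -> Lsum q1 q2 0 a2 = 0.
Proof.
move=> q1g; rewrite /Lsum muln0 !big_ord1 /=.
rewrite (_ : (0%:Z - 0%:Z) ^+ 2 + a2 * (0%:Z - 0%:Z) ^+ 2 = 0); last by ring.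
by case: ifP => // _; rewrite jacobi0.
Qed.

Lemma norm_Lsum_le (R : realFieldType) (q : nat) (a2 : int) (q1 q2 N : nat) :
  odd q -> coprimez a2 q%:Z -> (1 < q1)%N -> (0 < q2)%N -> (q1 * q2)%N = radical q ->
  (0 < N)%N ->
  `|(Lsum q1 q2 N a2)%:~R : R| <= 7 * 4 ^+ size (primes q2) * N%:R * q1%:R ^+ 2.
Proof.
move=> oq cop q1g q20 hrad N0; have q10 : (0 < q1)%N by lia.
have hz : \sum_(u1 < q1) \sum_(u2 < q1) ((jacobi (qform a2 u1%:Z u2%:Z) q1)%:~R : R) = 0.
  transitivity ((\sum_(u1 < q1) \sum_(u2 < q1) jacobi (qform a2 u1%:Z u2%:Z) q1)%:~R : R).
    by rewrite rmorph_sum; apply: eq_bigr => u1 _; rewrite rmorph_sum.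
  by rewrite (sum_jacobi_qform_radical oq cop q1g hrad).
have aP : all prime (primes q2) by apply/allP => r; rewrite mem_primes => /andP [].
have [A hA] := sieve_box_sum_approx R a2 (2 * N).+1 (- N%:Z) q10 (D := [::]) (primes_uniq q2)
  isT aP isT (introT allP (fun r _ => isT)) (coprime_factor_radical hrad) isT.
rewrite Lsum_residues //.
apply: le_trans (sum_mean_zero_mul_le hz (fun u1 u2 => jacobi_norm_le1 R _ q1)
                   (fun (u1 u2 : 'I_q1) => hA u1%:Z u2%:Z)) _.
rewrite expr0 mulr1; set a := 4 ^+ _; set Q := q1%:R ^+ 2.
rewrite (_ : 7 * a * N%:R * Q = Q * (a * (7 * N%:R))); last by ring.
rewrite ler_wpM2l ?exprn_ge0 // ler_wpM2l ?exprn_ge0 //.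
have q1R : 1 <= q1%:R :> R by rewrite ler1n; lia.
have NR : 1 <= N%:R :> R by rewrite ler1n.
have e : (2 * N).+1%:R = 2 * N%:R + 1 :> R by rewrite -natr1 natrM.
have : 2 * (2 * N).+1%:R / q1%:R <= 2 * (2 * N).+1%:R :> R.
  by rewrite ler_pdivrMr ?ler_peMr ?mulr_ge0 //; lra.
rewrite e; lra.
Qed.

Lemma size_primes_factor_radical (q q1 q2 : nat) : (q1 * q2)%N = radical q ->
  (size (primes q2) <= size (primes q))%N.
Proof.
move=> hrad; apply: uniq_leq_size; first exact: primes_uniq.
move=> r; rewrite mem_primes => /and3P [pr _ rq2].
by apply: mem_primes_radical => //; rewrite -hrad dvdn_mull.
Qed.

Lemma powR_ge_eventually (R : realType) (eps c : R) : 0 < eps -> 0 <= c ->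
  exists B : nat, forall p : nat, (B <= p)%N -> c <= p%:R `^ eps.
Proof.
move=> e0 c0; set t := c `^ eps^-1.
exists (Num.Def.trunc t).+1 => p hp.
have tp : t <= p%:R by apply: le_trans (ltW (truncnS_gt t)) _; rewrite ler_nat.
have ct : t `^ eps = c by rewrite /t -powRrM mulVf ?gt_eqF // powRr1.
by rewrite -ct; apply: (ge0_ler_powR (ltW e0)); rewrite ?nnegrE ?powR_ge0.
Qed.

Lemma prod_cond_const (R : pzSemiRingType) (s : seq nat) (P : pred nat) (x : R) :
  \prod_(i <- s) (if P i then x else 1) = x ^+ count P s.
Proof.
elim: s => [|a s IH] /=; first by rewrite big_nil expr0.
by rewrite big_cons IH; case: (P a); rewrite ?exprS ?mul1r ?add0n.
Qed.

Lemma prod_const_seq (R : pzSemiRingType) (s : seq nat) (x : R) :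
  \prod_(i <- s) x = x ^+ size s.
Proof.
elim: s => [|a s IH] /=; first by rewrite big_nil expr0.
by rewrite big_cons IH exprS.
Qed.

Lemma powR_prod (R : realType) (s : seq nat) (e : R) :
  \prod_(p <- s) (p%:R `^ e) = (\prod_(p <- s) p)%N%:R `^ e.
Proof.
elim: s => [|a s IH] /=; first by rewrite !big_nil powR1.
by rewrite !big_cons IH natrM powRM.
Qed.

(* Each prime [p >= B] pays its factor [4] out of [p ^ eps]; the primes below
   [B] contribute at most [4 ^ B]. *)
Lemma four_pow_omega_le (R : realType) (eps : R) : 0 < eps -> exists K : R, 0 < K /\
  forall q : nat, (0 < q)%N -> 4 ^+ size (primes q) <= K * q%:R `^ eps.
Proof.
move=> e0; have [B big4] := powR_ge_eventually e0 (ler0n R 4).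
have ge1 (p : nat) : (0 < p)%N -> 1 <= p%:R `^ eps.
  move=> p0; apply: (@le_trans _ _ (1 `^ eps)); first by rewrite powR1.
  by apply: (ge0_ler_powR (ltW e0)); rewrite ?nnegrE ?ler01 ?ler0n ?ler1n.
exists (4 ^+ B); split; first exact: exprn_gt0.
move=> q q0; set s := primes q.
have sp p : p \in s -> prime p by rewrite mem_primes => /andP [].
apply: (@le_trans _ _ (\prod_(p <- s) ((if (p < B)%N then 4 else 1) * p%:R `^ eps))).
  rewrite -prod_const_seq big_seq [X in _ <= X]big_seq; apply: ler_prod => p hp.
  rewrite ler0n /=; have p0 := prime_gt0 (sp p hp).
  case: ltnP => hpB; last by rewrite mul1r big4.
  by rewrite -[X in X <= _]mulr1 ler_wpM2l // ge1.
rewrite big_split /= prod_cond_const powR_prod; apply: ler_pM.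
- exact: exprn_ge0.
- exact: powR_ge0.
- apply: ler_weXn2l; first by rewrite ler1n.
  rewrite -size_filter; have sub : {subset filter (fun p => (p < B)%N) s <= iota 0 B}.
    by move=> p; rewrite mem_filter mem_iota add0n => /andP [].
  apply: leq_trans (uniq_leq_size _ sub) _; last by rewrite size_iota.
  by rewrite filter_uniq // primes_uniq.
- by apply: (ge0_ler_powR (ltW e0)); rewrite ?nnegrE ?ler0n // ler_nat radical_le.
Qed.

Theorem mainTheorem8 (R : realType) (eps : R) :
  0 < eps ->
  exists C : R, 0 < C /\
    forall (q : nat) (a2 : int) (q1 q2 N : nat),
      odd q -> coprimez a2 q%:Z ->
      (1 < q1)%N -> (0 < q2)%N -> (q1 * q2)%N = radical q ->
      (N <= q)%N ->
      `|(Lsum q1 q2 N a2)%:~R : R| <=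
        C * (N%:R : R) * (q1%:R : R) ^+ 2 * powR (q%:R : R) eps.
Proof.
move=> e0; have [K [K0 hK]] := four_pow_omega_le e0.
exists (7 * K); split; first by rewrite mulr_gt0.
move=> q a2 q1 q2 N oq cop q1g q20 hrad _.
have [->|N0] := posnP N; first by rewrite Lsum0 // normr0 mulr0 !mul0r.
have q0 : (0 < q)%N by case: q oq {cop hrad}.
have h4 : 4 ^+ size (primes q2) <= K * q%:R `^ eps :> R.
  apply: le_trans (hK q q0); apply: ler_weXn2l; first by rewrite ler1n.
  exact: size_primes_factor_radical hrad.
apply: le_trans (norm_Lsum_le R oq cop q1g q20 hrad N0) _.
rewrite (_ : _ * q%:R `^ eps = 7 * (K * q%:R `^ eps) * N%:R * q1%:R ^+ 2); last by ring.
by apply: ler_wpM2r; rewrite ?exprn_ge0 //; apply: ler_wpM2r => //; apply: ler_wpM2l.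
Qed.
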